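(* Let $G$ be a torsion abelian group and $\varphi\colon G\to G$ an endomorphism. Then $\varphi$ is positively expansive if and only if it is a factor of a unilateral Bernoulli shift $\sigma\colon S^{(\mathbb N)}\to S^{(\mathbb N)}$ for some finite abelian group $S$. Analogously, an automorphism $\varphi\colon G\to G$ is expansive if and only if it is a factor of a bilateral Bernoulli shift $\sigma\colon S^{(\mathbb Z)}\to S^{(\mathbb Z)}$ for some finite abelian group $S$.
   Context: $\mathbb N=\{0,1,2,\dots\}$. An endomorphism $\varphi$ of an abelian group $G$ is positively expansive if there is a finite subgroup $S\leq G$ such that for every finite subgroup $F\leq G$ there is $n\in\mathbb N$ with $F\subseteq\sum_{k=0}^n\varphi^kS$; an automorphism is expansive if the same holds with $\sum_{|k|\leq n}\varphi^kS$ in place of $\sum_{k=0}^n\varphi^kS$. For $I\in\{\mathbb N,\mathbb Z\}$ and a finite abelian group $S$, $S^{(I)}=\bigoplus_{k\in I}S$ (finitely supported sequences), and the shift $\sigma\colon S^{(I)}\to S^{(I)}$ is $\sigma((s_k))=(s_{k-1})$, with the convention $s_{-1}=0$ when $I=\mathbb N$. An endomorphism $\psi\colon H\to H$ is a factor of $\varphi\colon G\to G$ if there is a surjective homomorphism $\pi\colon G\to H$ with $\pi\circ\varphi=\psi\circ\pi$. *)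

From HB Require Import structures.
From mathcomp Require Import all_boot all_order all_algebra.
From mathcomp Require Import finmap.
Set Implicit Arguments. Unset Strict Implicit. Unset Printing Implicit Defensive.
Import Order.TTheory GRing.Theory Num.Theory.
Local Open Scope ring_scope.
Local Open Scope fset_scope.

Definition torsion (G : zmodType) : Prop :=
  forall x : G, exists n : nat, (0 < n)%N /\ x *+ n = 0.

Definition finite_subgroup (G : zmodType) (A : {fset G}) : Prop :=
  0 \in A /\ (forall x y, x \in A -> y \in A -> x - y \in A).

Definition in_pos_sum (G : zmodType) (phi : G -> G) (S : {fset G}) (n : nat)
  (x : G) : Prop :=
  exists s : nat -> G, (forall k, s k \in S) /\
    x = \sum_(k < n.+1) iter k phi (s k).

Definition iterz (G : Type) (phi psi : G -> G) (k : int) : G -> G :=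
  match k with
  | Posz m => iter m phi
  | Negz m => iter m.+1 psi
  end.

Definition in_bil_sum (G : zmodType) (phi psi : G -> G) (S : {fset G}) (n : nat)
  (x : G) : Prop :=
  exists s : int -> G, (forall k, s k \in S) /\
    x = \sum_(i < (n.*2).+1) iterz phi psi (i%:Z - n%:Z) (s (i%:Z - n%:Z)).

Definition pos_expansive (G : zmodType) (phi : G -> G) : Prop :=
  exists S : {fset G}, finite_subgroup S /\
    forall F : {fset G}, finite_subgroup F ->
      exists n : nat, forall x, x \in F -> in_pos_sum phi S n x.

Definition expansive (G : zmodType) (phi : G -> G) : Prop :=
  exists psi : G -> G, cancel phi psi /\ cancel psi phi /\
  exists S : {fset G}, finite_subgroup S /\
    forall F : {fset G}, finite_subgroup F ->
      exists n : nat, forall x, x \in F -> in_bil_sum phi psi S n x.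

Local Close Scope fset_scope.
(* S^(N) and S^(Z): finitely supported sequences, as predicates on all
   sequences; the group operation is pointwise addition. *)
Definition fsupp_nat (S : zmodType) (s : nat -> S) : Prop :=
  exists N : nat, forall k, (N <= k)%N -> s k = 0.

Definition fsupp_int (S : zmodType) (s : int -> S) : Prop :=
  exists N : nat, forall k : int, N%:Z <= `|k| -> s k = 0.

Definition ushift (S : zmodType) (s : nat -> S) : nat -> S :=
  fun k => if k is k'.+1 then s k' else 0.

Definition bshift (S : zmodType) (s : int -> S) : int -> S :=
  fun k => s (k - 1).

Definition factor_of_ushift (G : zmodType) (phi : G -> G) (S : zmodType) : Prop :=
  exists pi : (nat -> S) -> G,
    (forall s t, fsupp_nat s -> fsupp_nat t ->
        pi (fun k => s k + t k) = pi s + pi t) /\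
    (forall g : G, exists s, fsupp_nat s /\ pi s = g) /\
    (forall s, fsupp_nat s -> pi (ushift s) = phi (pi s)).

Definition factor_of_bshift (G : zmodType) (phi : G -> G) (S : zmodType) : Prop :=
  exists pi : (int -> S) -> G,
    (forall s t, fsupp_int s -> fsupp_int t ->
        pi (fun k => s k + t k) = pi s + pi t) /\
    (forall g : G, exists s, fsupp_int s /\ pi s = g) /\
    (forall s, fsupp_int s -> pi (bshift s) = phi (pi s)).

From HB Require Import structures.
From mathcomp Require Import all_boot all_order all_algebra.
From mathcomp Require Import finmap zify.
From Stdlib Require Import FunctionalExtensionality ClassicalEpsilon.
Set Implicit Arguments. Unset Strict Implicit. Unset Printing Implicit Defensive.
Import Order.TTheory GRing.Theory Num.Theory.
Local Open Scope ring_scope.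

(* If a finite subgroup S witnesses expansiveness, the map (s_k) |-> sum_k phi^k s_k from
   S^(I) to G is additive and turns the shift into phi.  It is onto because in a torsion
   group every element lies in a finite (cyclic) subgroup, hence in the sum of the
   phi^k S over some window of exponents k.  Conversely, for a factor map pi, the image S
   of the copy of the finite group at coordinate 0 is a finite subgroup and
   pi(delta_k a) = phi^k pi(delta_0 a), so pi(s) lies in the sum of the phi^k S over any
   window containing the support of s; one window then covers a whole finite subgroup.
   Only the facts that the windows {0..n} (resp. {-n..n}) increase and exhaust N
   (resp. Z) are used, so both cases are the same argument. *)

Section FiniteSubgroups.
Variables (G : zmodType) (A : {fset G}) (hA : finite_subgroup A).

(* The unused proof argument lets the canonical [zmod_closed] instance depend on [hA]. *)
Definition subgroup_pred of finite_subgroup A : {pred G} := fun x => x \in A.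

Fact subgroup_pred_zmod_closed : zmod_closed (subgroup_pred hA).
Proof. by case: hA => A0 AB; split=> // x y; apply: AB. Qed.

HB.instance Definition _ :=
  GRing.isZmodClosed.Build G (subgroup_pred hA) subgroup_pred_zmod_closed.

Inductive subgroup_type : predArgType := SubgroupElt x of x \in subgroup_pred hA.

Definition subgroup_val (u : subgroup_type) : G := let: SubgroupElt x _ := u in x.

HB.instance Definition _ := [isSub for subgroup_val].
HB.instance Definition _ := [Choice of subgroup_type by <:].
HB.instance Definition _ := [SubChoice_isSubZmodule of subgroup_type by <:].

Definition subgroup_to_fset (u : subgroup_type) : A := [` valP u]%fset.
Definition subgroup_of_fset (x : A) : subgroup_type := SubgroupElt (fsvalP x).

Lemma subgroup_to_fsetK : cancel subgroup_to_fset subgroup_of_fset.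
Proof. by move=> u; apply: val_inj. Qed.

HB.instance Definition _ :=
  isCountable.Build subgroup_type (pcan_pickleK (can_pcan subgroup_to_fsetK)).
HB.instance Definition _ :=
  isFinite.Build subgroup_type (pcan_enumP (can_pcan subgroup_to_fsetK)).

End FiniteSubgroups.

Lemma mulrn_modn (G : zmodType) (g : G) n m : g *+ n = 0 -> g *+ m = g *+ (m %% n).
Proof. by move=> gn0; rewrite {1}(divn_eq m n) mulrnDr mulnC mulrnA gn0 mul0rn add0r. Qed.

Lemma torsion_mem_finite_subgroup (G : zmodType) : torsion G ->
  forall g : G, exists F : {fset G}, finite_subgroup F /\ g \in F.
Proof.
move=> hG g; have [n [n_gt0 gn0]] := hG g.
pose F := [fset g *+ i | i in iota 0 n]%fset.
have memF m : g *+ m \in F.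
  by rewrite (mulrn_modn m gn0); apply/imfsetP; exists (m %% n)%N; rewrite ?mem_iota ?ltn_pmod.
have memFP x : x \in F -> exists m, x = g *+ m by case/imfsetP=> i _ ->; exists i.
exists F; split; last by rewrite -[g]mulr1n memF.
split=> [|_ _ /memFP[i ->] /memFP[j ->]]; first by rewrite -(mulr0n g) memF.
have -> : - (g *+ j) = g *+ (n - j %% n).
  rewrite mulrnBr; last by rewrite ltnW // ltn_pmod.
  by rewrite gn0 sub0r -(mulrn_modn j gn0).
by rewrite -mulrnDr memF.
Qed.

Lemma torsion_cover (G : zmodType) (P : nat -> G -> Prop) : torsion G ->
  (forall F : {fset G}, finite_subgroup F -> exists n, forall x, x \in F -> P n x) ->
  forall g, exists n, P n g.
Proof.
move=> hG expP g; have [F [hF gF]] := torsion_mem_finite_subgroup hG g.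
by have [n hn] := expP F hF; exists n; apply: hn.
Qed.

Lemma eventually_uniform (T : choiceType) (P : nat -> T -> Prop) (F : {fset T}) :
  (forall x, exists N, forall n, (N <= n)%N -> P n x) ->
  exists n, forall x, x \in F -> P n x.
Proof.
move=> evP; suff [N hN] : exists N, forall x, x \in enum_fset F ->
    forall n, (N <= n)%N -> P n x by exists N => x /hN; apply.
elim: (enum_fset F) => [|a r [N hN]]; first by exists 0%N.
have [M hM] := evP a; exists (maxn M N) => x; rewrite inE => /predU1P[-> | xr] n.
  by rewrite geq_max => /andP[/hM].
by rewrite geq_max => /andP[_ /hN]; apply.
Qed.

Lemma sum_uniq_superset (I : eqType) (V : nmodType) (r r' : seq I) (F : I -> V) :
  uniq r -> uniq r' -> {subset r <= r'} -> (forall k, k \notin r -> F k = 0) ->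
  \sum_(k <- r') F k = \sum_(k <- r) F k.
Proof.
move=> r_uniq r'_uniq sub_rr' F0.
rewrite (bigID (mem r)) /= [X in _ + X]big1 ?addr0 => [|k /F0 //].
rewrite -big_filter; apply: perm_big; apply: uniq_perm; rewrite ?filter_uniq //.
by move=> k; rewrite mem_filter andb_idr //; apply: sub_rr'.
Qed.

Lemma morph_add0 (G H : zmodType) (f : G -> H) : {morph f : x y / x + y} -> f 0 = 0.
Proof. by move=> fD; apply: (@addrI _ (f 0)); rewrite -fD !addr0. Qed.

Lemma iterD (G : zmodType) (f : G -> G) :
  {morph f : x y / x + y} -> forall n, {morph iter n f : x y / x + y}.
Proof. by move=> fD; elim=> // n IH x y /=; rewrite IH fD. Qed.

Definition delta (I : eqType) (S : zmodType) (j : I) (a : S) : I -> S :=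
  fun k => if k == j then a else 0.

Lemma deltaD (I : eqType) (S : zmodType) (j : I) (a b : S) :
  delta j (a + b) = fun k => delta j a k + delta j b k.
Proof.
by apply: functional_extensionality => k; rewrite /delta; case: eqP; rewrite ?addr0.
Qed.

Lemma sum_delta (I : eqType) (S : zmodType) (r : seq I) (s : I -> S) j : uniq r ->
  \sum_(k <- r) delta k (s k) j = if j \in r then s j else 0.
Proof.
move=> r_uniq; rewrite /delta; case: ifP => [jr | /negP jr].
  rewrite (bigD1_seq j) //= eqxx big1 ?addr0 // => k.
  by rewrite eq_sym => /negbTE->.
by rewrite big1_seq // => k /andP[_ kr]; case: eqP => // jk; rewrite jk kr in jr.
Qed.

Definition supported_on (I : eqType) (S : zmodType) (s : I -> S) (r : seq I) : Prop :=
  forall k, k \notin r -> s k = 0.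

(* [window n] is the range of exponents k of phi^k in the n-th sum of the definition of
   (positive) expansiveness, and [finsupp] the finite-support predicate of the factor
   definitions. *)
Record window_system (I : eqType) := WindowSystem {
  window : nat -> seq I;
  window_uniq : forall n, uniq (window n);
  window_mono : forall n m, (n <= m)%N -> {subset window n <= window m};
  window_exhaust : forall k, exists n, k \in window n;
  finsupp : forall S : zmodType, (I -> S) -> Prop;
  finsuppP : forall (S : zmodType) (s : I -> S),
    finsupp s <-> exists n, supported_on s (window n) }.
Arguments finsupp {I} w {S} s.

Section Windows.
Variables (I : eqType) (W : window_system I).

Definition in_window_sum (G : zmodType) (pw : I -> G -> G) (A : {fset G}) n x :=
  exists s : I -> G, (forall k, s k \in A) /\ x = \sum_(k <- window W n) pw k (s k).

Lemma supported_window_mono (S : zmodType) (s : I -> S) n m :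
  supported_on s (window W n) -> (n <= m)%N -> supported_on s (window W m).
Proof. by move=> sn le_nm k km; apply: sn; apply: contra km; apply: window_mono. Qed.

Lemma sum_window_supported (V : zmodType) (f : I -> V) n m :
  supported_on f (window W n) -> (n <= m)%N ->
  \sum_(k <- window W m) f k = \sum_(k <- window W n) f k.
Proof.
move=> fn le_nm; apply: sum_uniq_superset; rewrite ?window_uniq //.
exact: window_mono.
Qed.

Lemma finsupp0 (S : zmodType) : finsupp W (fun _ : I => 0 : S).
Proof. by apply/finsuppP; exists 0%N. Qed.

Lemma finsuppD (S : zmodType) (s t : I -> S) :
  finsupp W s -> finsupp W t -> finsupp W (fun k => s k + t k).
Proof.
move=> /finsuppP[n sn] /finsuppP[m tm]; apply/finsuppP; exists (maxn n m) => k km.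
rewrite (supported_window_mono sn (leq_maxl n m)) //.
by rewrite (supported_window_mono tm (leq_maxr n m)) ?addr0.
Qed.

Lemma delta_finsupp (S : zmodType) j (a : S) : finsupp W (delta j a).
Proof.
apply/finsuppP; have [n jn] := window_exhaust W j; exists n => k.
by rewrite /delta; case: eqP => // ->; rewrite jn.
Qed.

Section WindowMap.
Variables (G : zmodType) (pw : I -> G -> G).
Hypothesis pwD : forall k, {morph pw k : x y / x + y}.
Variables (A : {fset G}) (hA : finite_subgroup A).

(* Meaningful only for finitely supported [t], see [window_mapE]. *)
Definition window_bound (t : I -> subgroup_type hA) : nat :=
  epsilon (inhabits 0%N) (fun n => supported_on t (window W n)).

Definition window_map (t : I -> subgroup_type hA) : G :=
  \sum_(k <- window W (window_bound t)) pw k (val (t k)).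

Lemma window_mapE t n :
  supported_on t (window W n) -> window_map t = \sum_(k <- window W n) pw k (val (t k)).
Proof.
move=> tn; have tb : supported_on t (window W (window_bound t)).
  exact: (epsilon_spec _ (fun m => supported_on t (window W m)) (ex_intro _ n tn)).
have pwt m : supported_on t (window W m) ->
    supported_on (fun k => pw k (val (t k))) (window W m).
  by move=> tm k /tm ->; rewrite raddf0 (morph_add0 (pwD k)).
rewrite /window_map -(sum_window_supported (pwt _ tb) (leq_maxl _ n)).
exact: sum_window_supported (pwt _ tn) (leq_maxr _ n).
Qed.

Lemma window_map_additive s t : finsupp W s -> finsupp W t ->
  window_map (fun k => s k + t k) = window_map s + window_map t.
Proof.
move=> /finsuppP[n sn] /finsuppP[m tm].
have sN := supported_window_mono sn (leq_maxl n m).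
have tN := supported_window_mono tm (leq_maxr n m).
have stN : supported_on (fun k => s k + t k) (window W (maxn n m)).
  by move=> k kN; rewrite sN ?tN ?addr0.
rewrite (window_mapE stN) (window_mapE sN) (window_mapE tN) -big_split /=.
by apply: eq_bigr => k _; apply: pwD.
Qed.

Lemma window_map_surjective : (forall g, exists n, in_window_sum pw A n g) ->
  forall g, exists t, finsupp W t /\ window_map t = g.
Proof.
move=> cover g; have [n [s [sA ->]]] := cover g.
pose t k : subgroup_type hA := if k \in window W n then SubgroupElt (sA k) else 0.
have tn : supported_on t (window W n) by move=> k /negbTE kn; rewrite /t kn.
exists t; split; first by apply/finsuppP; exists n.
by rewrite (window_mapE tn); apply: eq_big_seq => k kn; rewrite /t kn.
Qed.

End WindowMap.

Section FactorCover.
Variables (G : zmodType) (pw : I -> G -> G) (S : finZmodType) (pi : (I -> S) -> G) (o : I).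
Hypothesis piD : forall s t, finsupp W s -> finsupp W t ->
  pi (fun k => s k + t k) = pi s + pi t.
Hypothesis pi_surj : forall g, exists s, finsupp W s /\ pi s = g.
Hypothesis pi_delta : forall j a, pi (delta j a) = pw j (pi (delta o a)).

Lemma factor_map0 : pi (fun _ => 0) = 0.
Proof.
apply: (@addrI _ (pi (fun _ => 0))); rewrite -piD; try exact: finsupp0.
by rewrite !addr0.
Qed.

Lemma factor_map_sum (r : seq I) (F : I -> I -> S) : (forall i, finsupp W (F i)) ->
  finsupp W (fun k => \sum_(i <- r) F i k) /\
  pi (fun k => \sum_(i <- r) F i k) = \sum_(i <- r) pi (F i).
Proof.
move=> hF; elim: r => [|i r [IHs IHpi]].
  have -> : (fun k => \sum_(i <- [::]) F i k) = fun _ => 0.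
    by apply: functional_extensionality => k; rewrite big_nil.
  by rewrite big_nil factor_map0; split; first exact: finsupp0.
have -> : (fun k => \sum_(j <- i :: r) F j k) = fun k => F i k + \sum_(j <- r) F j k.
  by apply: functional_extensionality => k; rewrite big_cons.
by rewrite big_cons piD // IHpi; split; first exact: finsuppD.
Qed.

Lemma factor_window_cover : exists A : {fset G}, finite_subgroup A /\
  forall x, exists N, forall n, (N <= n)%N -> in_window_sum pw A n x.
Proof.
pose base a := pi (delta o a).
have baseB a b : base (a - b) = base a - base b.
  rewrite -[in base a](subrK b a) /base (deltaD o (a - b) b).
  by rewrite (piD (delta_finsupp o _) (delta_finsupp o _)) addrK.
pose A := [fset base a | a in {: S}]%fset.
have hA : finite_subgroup A.
  split; first by apply/imfsetP; exists 0 => //; rewrite -[LHS](subrr (base 0)) -baseB subrr.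
  move=> _ _ /imfsetP[a _ ->] /imfsetP[b _ ->].
  by apply/imfsetP; exists (a - b); rewrite ?baseB.
exists A; split => // x; have [s [/finsuppP[N sN] <-]] := pi_surj x.
exists N => n le_Nn; exists (fun k => base (s k)); split.
  by move=> k; apply/imfsetP; exists (s k).
have sn := supported_window_mono sN le_Nn.
have -> : pi s = pi (fun j => \sum_(k <- window W n) delta k (s k) j).
  congr pi; apply: functional_extensionality => j.
  by rewrite sum_delta ?window_uniq //; case: ifP => // /negbT /sn.
have [_ ->] := factor_map_sum (window W n) (fun k => delta_finsupp k (s k)).
by apply: eq_bigr => k _; apply: pi_delta.
Qed.

End FactorCover.
End Windows.
Arguments window_map {I} W {G} pw {A} hA t.
Arguments factor_window_cover {I} W {G pw S pi o}.

Definition nat_window (n : nat) : seq nat := index_iota 0 n.+1.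

Lemma mem_nat_window n k : (k \in nat_window n) = (k <= n)%N.
Proof. by rewrite mem_index_iota. Qed.

Lemma nat_window_uniq n : uniq (nat_window n).
Proof. exact: iota_uniq. Qed.

Lemma nat_window_mono n m : (n <= m)%N -> {subset nat_window n <= nat_window m}.
Proof. by move=> le_nm k; rewrite !mem_nat_window => /leq_trans; apply. Qed.

Lemma nat_window_exhaust k : exists n, k \in nat_window n.
Proof. by exists k; rewrite mem_nat_window. Qed.

Lemma fsupp_nat_window (S : zmodType) (s : nat -> S) :
  fsupp_nat s <-> exists n, supported_on s (nat_window n).
Proof.
split=> [[N sN] | [n sn]].
  by exists N => k; rewrite mem_nat_window -ltnNge => /ltnW /sN.
by exists n.+1 => k le_nk; apply: sn; rewrite mem_nat_window -ltnNge.
Qed.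

Definition nat_windows : window_system nat :=
  WindowSystem nat_window_uniq nat_window_mono nat_window_exhaust fsupp_nat_window.

Section UnilateralShift.
Variables (G : zmodType) (phi : {additive G -> G}).

Lemma iter_phiD k : {morph iter k phi : x y / x + y}.
Proof. exact: (iterD (raddfD phi) k). Qed.

Lemma in_pos_sumE (A : {fset G}) n x :
  in_pos_sum phi A n x <-> in_window_sum nat_windows (fun k => iter k phi) A n x.
Proof. by split=> -[s [sA ->]]; exists s; rewrite /= /nat_window big_mkord. Qed.

Lemma window_map_ushift (A : {fset G}) (hA : finite_subgroup A) (t : nat -> subgroup_type hA) :
  fsupp_nat t ->
  window_map nat_windows (fun k => iter k phi) hA (ushift t) =
  phi (window_map nat_windows (fun k => iter k phi) hA t).
Proof.
move=> /(finsuppP nat_windows)[n tn].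
have stn : supported_on (ushift t) (window nat_windows n.+1).
  by case=> // k; rewrite /= !mem_nat_window ltnS => kn; apply: tn; rewrite /= mem_nat_window.
rewrite (window_mapE iter_phiD stn) (window_mapE iter_phiD tn) /= /nat_window.
by rewrite big_nat_recl //= add0r raddf_sum.
Qed.

Lemma pos_expansive_factor_ushift : torsion G ->
  pos_expansive phi -> exists S : finZmodType, factor_of_ushift phi S.
Proof.
move=> hG [A [hA expA]].
exists (subgroup_type hA), (window_map nat_windows (fun k => iter k phi) hA).
split; first exact: (window_map_additive (W := nat_windows) iter_phiD).
split; last exact: window_map_ushift.
apply: (window_map_surjective (W := nat_windows) iter_phiD) => g.
by have [n /in_pos_sumE] := torsion_cover hG expA g; exists n.
Qed.

Lemma factor_ushift_pos_expansive (S : finZmodType) :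
  factor_of_ushift phi S -> pos_expansive phi.
Proof.
case=> pi [piD [pi_surj pi_shift]].
have pi_delta j a : pi (delta j a) = iter j phi (pi (delta 0%N a)).
  elim: j => //= j <-; rewrite -pi_shift; last exact: (delta_finsupp nat_windows).
  by congr pi; apply: functional_extensionality => -[].
have [A [hA cover]] :=
  factor_window_cover nat_windows (pw := fun k => iter k phi) piD pi_surj pi_delta.
exists A; split => // F _; have [n hn] := eventually_uniform F cover.
by exists n => x /hn /in_pos_sumE.
Qed.

End UnilateralShift.

Definition int_window (n : nat) : seq int :=
  [seq i%:Z - n%:Z | i <- index_iota 0 n.*2.+1].

Lemma mem_int_window n k : (k \in int_window n) = (absz k <= n)%N.
Proof.
apply/mapP/idP => [[i] | kn]; first by rewrite mem_index_iota => /andP[_ ?] ->; lia.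
by exists (absz (k + n%:Z)); rewrite ?mem_index_iota; lia.
Qed.

Lemma int_window_uniq n : uniq (int_window n).
Proof. by rewrite map_inj_uniq ?iota_uniq // => i j; lia. Qed.

Lemma int_window_mono n m : (n <= m)%N -> {subset int_window n <= int_window m}.
Proof. by move=> le_nm k; rewrite !mem_int_window => /leq_trans; apply. Qed.

Lemma int_window_exhaust k : exists n, k \in int_window n.
Proof. by exists (absz k); rewrite mem_int_window. Qed.

Lemma fsupp_int_window (S : zmodType) (s : int -> S) :
  fsupp_int s <-> exists n, supported_on s (int_window n).
Proof.
split=> [[N sN] | [n sn]].
  by exists N => k; rewrite mem_int_window => kN; apply: sN; lia.
by exists n.+1 => k kn; apply: sn; rewrite mem_int_window; lia.
Qed.

Definition int_windows : window_system int :=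
  WindowSystem int_window_uniq int_window_mono int_window_exhaust fsupp_int_window.

Section BilateralShift.
Variables (G : zmodType) (phi : {additive G -> G}).

Lemma in_bil_sumE psi (A : {fset G}) n x :
  in_bil_sum phi psi A n x <-> in_window_sum int_windows (iterz phi psi) A n x.
Proof. by split=> -[s [sA ->]]; exists s; rewrite /= /int_window big_map big_mkord. Qed.

Section Inverse.
Variable psi : G -> G.
Hypotheses (phiK : cancel phi psi) (psiK : cancel psi phi).

Lemma inverse_additive : {morph psi : x y / x + y}.
Proof. by move=> x y; apply: (can_inj phiK); rewrite raddfD !psiK. Qed.

Lemma iterzD k : {morph iterz phi psi k : x y / x + y}.
Proof. by case: k => n /=; apply: iterD; [apply: raddfD | apply: inverse_additive]. Qed.

Lemma iterz_succ k x : iterz phi psi (k + 1) x = phi (iterz phi psi k x).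
Proof.
case: k => [m | [|m]].
- by have -> : Posz m + 1 = Posz m.+1 by lia.
- by rewrite /= psiK.
- have -> : Negz m.+1 + 1 = Negz m by rewrite !NegzE; lia.
  by rewrite /= psiK.
Qed.

Lemma iterz_orbit (g : int -> G) : (forall k, g (k + 1) = phi (g k)) ->
  forall k, g k = iterz phi psi k (g 0).
Proof.
move=> gS; elim/int_rect => [//| n IH | n IH].
  by rewrite intS addrC gS iterz_succ IH.
apply: (can_inj phiK); rewrite -gS -iterz_succ.
by have -> : - (n.+1)%:Z + 1 = - n%:Z by lia.
Qed.

Lemma window_map_bshift (A : {fset G}) (hA : finite_subgroup A) (t : int -> subgroup_type hA) :
  fsupp_int t ->
  window_map int_windows (iterz phi psi) hA (bshift t) =
  phi (window_map int_windows (iterz phi psi) hA t).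
Proof.
move=> /(finsuppP int_windows)[n tn].
have stn : supported_on (bshift t) (window int_windows n.+1).
  move=> k; rewrite /= mem_int_window => kn; apply: tn; rewrite /= mem_int_window; lia.
rewrite (window_mapE iterzD stn) (window_mapE iterzD tn).
pose f k := iterz phi psi k (val (t k)).
transitivity (phi (\sum_(k <- int_window n.+1) f (k - 1))).
  by rewrite raddf_sum; apply: eq_bigr => k _; rewrite /f -iterz_succ subrK.
rewrite -(big_map (fun k => k - 1) xpredT f); congr (phi _); apply: sum_uniq_superset.
- exact: int_window_uniq.
- by rewrite map_inj_uniq ?int_window_uniq //; apply: addIr.
- move=> k; rewrite mem_int_window => kn; apply/mapP; exists (k + 1); rewrite ?addrK //.
  by rewrite mem_int_window; lia.
- by move=> k /tn tk0; rewrite /f tk0 raddf0 (morph_add0 (iterzD k)).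
Qed.

End Inverse.

Lemma expansive_factor_bshift : torsion G ->
  expansive phi -> exists S : finZmodType, factor_of_bshift phi S.
Proof.
move=> hG [psi [phiK [psiK [A [hA expA]]]]].
exists (subgroup_type hA), (window_map int_windows (iterz phi psi) hA).
have pwD := iterzD phiK psiK.
split; first exact: (window_map_additive (W := int_windows) pwD).
split; last exact: window_map_bshift.
apply: (window_map_surjective (W := int_windows) pwD) => g.
by have [n /in_bil_sumE] := torsion_cover hG expA g; exists n.
Qed.

Lemma factor_bshift_expansive (S : finZmodType) :
  bijective phi -> factor_of_bshift phi S -> expansive phi.
Proof.
case=> psi phiK psiK [pi [piD [pi_surj pi_shift]]].
have pi_delta j a : pi (delta j a) = iterz phi psi j (pi (delta 0 a)).
  move: j; apply: (iterz_orbit phiK psiK) => k.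
  rewrite -pi_shift; last exact: (delta_finsupp int_windows).
  by congr pi; apply: functional_extensionality => i; rewrite /bshift /delta subr_eq.
have [A [hA cover]] :=
  factor_window_cover int_windows (pw := iterz phi psi) piD pi_surj pi_delta.
exists psi; do 2!split => //; exists A; split => // F _.
have [n hn] := eventually_uniform F cover.
by exists n => x /hn /in_bil_sumE.
Qed.

End BilateralShift.

Theorem proposition2p6 (G : zmodType) (hG : torsion G) :
  (forall phi : {additive G -> G},
     pos_expansive phi <->
     exists S : finZmodType, factor_of_ushift phi S) /\
  (forall phi : {additive G -> G}, bijective phi ->
     (expansive phi <->
      exists S : finZmodType, factor_of_bshift phi S)).
Proof.
split=> phi.
  split; first exact: pos_expansive_factor_ushift.
  by case=> S; apply: factor_ushift_pos_expansive.
move=> phi_bij; split; first exact: expansive_factor_bshift.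
by case=> S; apply: factor_bshift_expansive.
Qed.
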